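(* Let $\mathbb{F}_2$ be the free group on $T_1,T_2$, $X=\{-1,1\}^{\mathbb{F}_2}$ with the product of uniform measures $m$ and the shift action $(gx)^h=x^{hg}$, and let $X'=\{x\in X: gx\ne x \text{ for all } g\ne e\}$. Let $g_1,\dots,g_4$ be $T_1T_2^{-1},T_1^{-1}T_2,T_2T_1^{-1},T_2^{-1}T_1$ and let $g_5,\dots,g_{16}$ be the twelve distinct elements of reduced length $4$ obtained as products of two of $g_1,\dots,g_4$. Let $B_1,\dots,B_{17}$ be Borel sets partitioning $X'$ such that for every $i\le 16$ and $x\in X'$, the points $x$ and $g_ix$ lie in different sets, and let $\kappa(x)=j$ for $x\in B_j$. For $x\in X$ let $t(x)=\{T_1x,T_2x\}$ if $x^e=1$ and $t(x)=\{T_1^{-1}x,T_2^{-1}x\}$ if $x^e=-1$, and for $x\in X'$ let $L(x)=\kappa(t(x))$. Define the secondary graph on $X$: distinct $x,y\in X'$ are adjacent iff $t(x)\cap t(y)\ne\emptyset$, and points of $X\setminus X'$ have no neighbours. Then the colouring rule ''$c(x)\in L(x)$ and $c(x)\ne c(y)$ whenever $x,y$ are adjacent'', with colour set $\{1,\dots,17\}$ (proper list colouring of the secondary graph), is paradoxical.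
   Context: A colouring $c:X\to\{1,\dots,17\}$ satisfies the rule if the requirement holds at $m$-almost every $x$. The rule is paradoxical if (a) some colouring (not necessarily measurable) satisfies it, and (b) there is no pair $(\mu,c)$ where $\mu$ is a finitely additive $\mathbb{F}_2$-invariant probability measure on an $\mathbb{F}_2$-invariant algebra $\mathcal{B}$ containing all $m$-measurable sets and extending $m$, and $c$ is a colouring satisfying the rule all of whose colour classes lie in $\mathcal{B}$. *)

From Stdlib Require List.
From HB Require Import structures.
From mathcomp Require Import all_boot all_order all_algebra.
From mathcomp Require Import all_classical all_reals all_analysis.
Set Implicit Arguments. Unset Strict Implicit. Unset Printing Implicit Defensive.
Import Order.TTheory GRing.Theory Num.Theory.
Local Open Scope classical_set_scope.
Local Open Scope ring_scope.

(* a letter (i, s): generator T1 if i = false, T2 if i = true;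
   s = false means the generator itself, s = true its inverse *)
Definition letter := (bool * bool)%type.
Definition linv (a : letter) : letter := (a.1, ~~ a.2).

Fixpoint reduced (w : seq letter) : bool :=
  match w with
  | a :: ((b :: _) as w') => (b != linv a) && reduced w'
  | _ => true
  end.

Definition push (a : letter) (w : seq letter) : seq letter :=
  match w with
  | b :: w' => if b == linv a then w' else a :: w
  | [::] => [:: a]
  end.

Definition red (w : seq letter) : seq letter := foldr push [::] w.

Lemma reduced_tail a w : reduced (a :: w) -> reduced w.
Proof. by case: w => [|b w] //= /andP[]. Qed.

Lemma push_reduced a w : reduced w -> reduced (push a w).
Proof.
case: w => [|b w] //= Hw; case: ifP => Hb; first exact: reduced_tail Hw.
by rewrite /= Hb Hw.
Qed.

Lemma red_reduced w : reduced (red w).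
Proof. by elim: w => [|a w IH] //=; exact: push_reduced. Qed.

Definition F2 := {w : seq letter | reduced w}.

Definition F2word (g : F2) : seq letter := proj1_sig g.
Definition F2len (g : F2) : nat := size (F2word g).

Definition F2mk (w : seq letter) : F2 := exist _ (red w) (red_reduced w).
Definition F2one : F2 := F2mk [::].
Definition F2mul (g h : F2) : F2 := F2mk (F2word g ++ F2word h).
Definition F2inv (g : F2) : F2 := F2mk (rev (map linv (F2word g))).
Definition T1 : F2 := F2mk [:: (false, false)].
Definition T2 : F2 := F2mk [:: (true, false)].

(* ---------- The space X = {-1,1}^F2 (true <-> 1, false <-> -1) ---------- *)
Definition X := F2 -> bool.

Definition act (g : F2) (x : X) : X := fun h => x (F2mul h g).

Definition Xfree : set X := [set x | forall g : F2, g <> F2one -> act g x <> x].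

Definition cyl : set (set X) := [set A | exists (h : F2) (b : bool), A = [set x | x h = b]].
Definition Xm := g_sigma_algebraType cyl.

(* m is the product of the uniform measures on {-1,1}: every finite cylinder
   fixing the values at |s| distinct coordinates has measure 2^-|s| *)
Definition is_uniform_product (R : realType) (m : set Xm -> \bar R) : Prop :=
  forall (s : seq F2) (v : F2 -> bool), List.NoDup s ->
    m [set x : Xm | forall h, List.In h s -> x h = v h] = ((2%:R ^- size s : R)%:E).

Definition g4 (i : 'I_4) : F2 :=
  match val i with
  | 0 => F2mul T1 (F2inv T2)
  | 1 => F2mul (F2inv T1) T2
  | 2 => F2mul T2 (F2inv T1)
  | _ => F2mul (F2inv T2) T1
  end.

Definition G16 : set F2 :=
  [set g | (exists i, g = g4 i) \/
           (exists i j, g = F2mul (g4 i) (g4 j) /\ F2len g = 4%N)].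

Definition tset (x : X) : set X :=
  if x F2one then [set act T1 x; act T2 x]
  else [set act (F2inv T1) x; act (F2inv T2) x].

Definition Ladj (kappa : X -> 'I_17) (x : X) : set 'I_17 := kappa @` tset x.

Definition sec_adj (x y : X) : Prop :=
  Xfree x /\ Xfree y /\ x <> y /\ tset x `&` tset y !=set0.

(* the colouring requirement at x (colours 1..17 encoded as 'I_17) *)
Definition rule_at (kappa : X -> 'I_17) (c : X -> 'I_17) (x : X) : Prop :=
  (Xfree x -> c x \in Ladj kappa x) /\ (forall y, sec_adj x y -> c x <> c y).

Definition satisfies (R : realType) (m : set Xm -> \bar R)
  (kappa : X -> 'I_17) (c : X -> 'I_17) : Prop :=
  m.-negligible [set x : Xm | ~ rule_at kappa c x].

(* m-measurable sets (completion) *)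
Definition symdiff (A B : set X) : set X := (A `\` B) `|` (B `\` A).
Definition m_measurable (R : realType) (m : set Xm -> \bar R) (A : set X) : Prop :=
  exists B : set Xm, measurable B /\ m.-negligible (symdiff A B).

Definition image_act (g : F2) (A : set X) : set X := act g @` A.

Definition good_extension (R : realType) (m : set Xm -> \bar R)
  (Balg : set (set X)) (mu : set X -> R) : Prop :=
  Balg setT /\
      (forall A, Balg A -> Balg (~` A)) /\
      (forall A B, Balg A -> Balg B -> Balg (A `|` B)) /\
      (forall g A, Balg A -> Balg (image_act g A)) /\
      (forall A, m_measurable m A -> Balg A) /\
      (forall A, Balg A -> 0 <= mu A) /\
      mu setT = 1 /\
      (forall A B, Balg A -> Balg B -> A `&` B = set0 -> mu (A `|` B) = mu A + mu B) /\
      (forall g A, Balg A -> mu (image_act g A) = mu A) /\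
      (forall A (B : set Xm), measurable B -> m.-negligible (symdiff A B) ->
                      (mu A)%:E = m B).

Definition paradoxical (R : realType) (m : set Xm -> \bar R) (kappa : X -> 'I_17) : Prop :=
  (exists c : X -> 'I_17, satisfies m kappa c) /\
  ~ (exists (Balg : set (set X)) (mu : set X -> R) (c : X -> 'I_17),
        good_extension m Balg mu /\ satisfies m kappa c /\
        (forall j : 'I_17, Balg (c @^-1` [set j]))).

(* (a) The free part X' of X consists of free orbits, each a copy of F_2.
   Fix a base point r in every orbit and write x = g r; among the two points
   t x of t(x) pick the one for which the letter t does not cancel against g.
   This choice is injective on X'.  If t(x) and t(y) meet, then any u in t(x)
   and v in t(y) satisfy u = h v with h = e or h one of g_1, ..., g_16 (a
   finite check), so kappa of the chosen point is a proper list colouring,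
   everywhere on X'.
   (b) X \ X' is m-null: if g x = x then x(h g) = x(h) for infinitely many
   disjoint pairs of coordinates.  Given an invariant extension mu and a
   colouring c with colour classes in its algebra, the good points (in X',
   where the rule holds) have mu-mass 1 and split into the finitely many pieces
   P(s,b,j) = {x : x^e = s, c(x) = j = kappa(t_(s,b) x)}, where t_(s,b) ranges
   over the two generators defining t(x) when x^e = s.  The translates
   t_(s,b) P(s,b,j) are pairwise disjoint, since a collision produces two
   adjacent points of the same colour, and they all avoid the cylinder
   {z : z(T_i) = 1, z(T_i^-1) = -1 (i = 1, 2)} of measure 1/16.  Invariance
   and finite additivity then give 1 <= 15/16. *)

From HB Require Import structures.
From mathcomp Require Import all_boot all_order all_algebra.
From mathcomp Require Import all_classical all_reals all_analysis.
From mathcomp Require Import ring lra zify.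
Local Open Scope classical_set_scope.
Local Open Scope ring_scope.
Set Implicit Arguments. Unset Strict Implicit. Unset Printing Implicit Defensive.
Import Order.TTheory GRing.Theory Num.Theory.

(** * The free group F_2 *)

HB.instance Definition _ := Countable.copy F2 {w : seq letter | reduced w}.

Lemma linvK : involutive linv.
Proof. by case=> i s; rewrite /linv /= negbK. Qed.

Lemma linv_neq a : linv a != a.
Proof. by case: a => i [] /=; rewrite /linv /= xpair_eqE eqxx. Qed.

Lemma red_id w : reduced w -> red w = w.
Proof.
elim: w => [|a w IH] //= aw; rewrite IH; last exact: reduced_tail aw.
by case: w aw {IH} => [|b w] //= /andP[/negbTE ->].
Qed.

Lemma push_linvK a w : reduced w -> push a (push (linv a) w) = w.
Proof.
case: w => [|b w] /=; first by rewrite eqxx.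
case: ifP => [/eqP|_ _]; last by rewrite /push eqxx.
by rewrite linvK => <-; case: w => [|c w] //= /andP[/negbTE -> _].
Qed.

Lemma red_push_cat a s v : red (push a s ++ v) = push a (red (s ++ v)).
Proof.
case: s => [|b s] //=; case: ifP => [/eqP ->|//].
by rewrite push_linvK // red_reduced.
Qed.

Lemma red_catl u v : red (red u ++ v) = red (u ++ v).
Proof. by elim: u => [|a u IH] //=; rewrite red_push_cat IH. Qed.

Lemma red_catr u v : red (u ++ red v) = red (u ++ v).
Proof. by have := red_id (red_reduced v); rewrite /red !foldr_cat => ->. Qed.

Lemma red_cat_inv w : red (w ++ rev (map linv w)) = [::].
Proof.
elim: w => [|a w IH] //=.
by rewrite rev_cons -cats1 catA -red_catl /= IH /= eqxx.
Qed.

Lemma inv_wordK : involutive (fun w => rev (map linv w)).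
Proof. by move=> w; rewrite map_rev revK -map_comp (eq_map linvK) map_id. Qed.

Lemma F2word_inj : injective F2word.
Proof. by move=> [u pu] [v pv] /= uv; subst v; rewrite (eq_irrelevance pu pv). Qed.

Lemma F2word_reduced g : reduced (F2word g).
Proof. by case: g. Qed.

Lemma F2mulE g h : F2word (F2mul g h) = red (F2word g ++ F2word h).
Proof. by []. Qed.

Lemma F2mkK g : F2mk (F2word g) = g.
Proof. by apply: F2word_inj; rewrite /= red_id // F2word_reduced. Qed.

Lemma F2mulA a b c : F2mul (F2mul a b) c = F2mul a (F2mul b c).
Proof. by apply: F2word_inj; rewrite /= red_catl red_catr catA. Qed.

Lemma F2mul1g g : F2mul F2one g = g.
Proof. exact: F2mkK. Qed.

Lemma F2mulg1 g : F2mul g F2one = g.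
Proof. by rewrite /F2mul cats0 F2mkK. Qed.

Lemma F2mulgV g : F2mul g (F2inv g) = F2one.
Proof. by apply: F2word_inj; rewrite /= red_catr red_cat_inv. Qed.

Lemma F2mulVg g : F2mul (F2inv g) g = F2one.
Proof.
apply: F2word_inj; rewrite /= red_catl.
by rewrite -{2}(inv_wordK (F2word g)) red_cat_inv.
Qed.

(** * The shift action and the sets t(x) *)

Lemma actM a b x : act a (act b x) = act (F2mul a b) x.
Proof. by apply: funext => h; rewrite /act F2mulA. Qed.

Lemma act1 x : act F2one x = x.
Proof. by apply: funext => h; rewrite /act F2mulg1. Qed.

Lemma actK a : cancel (act a) (act (F2inv a)).
Proof. by move=> x; rewrite actM F2mulVg act1. Qed.

Lemma actVK a : cancel (act (F2inv a)) (act a).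
Proof. by move=> x; rewrite actM F2mulgV act1. Qed.

Lemma Xfree_act_inj x a b : Xfree x -> act a x = act b x -> a = b.
Proof.
move=> fx ab; have : act (F2mul (F2inv b) a) x = x by rewrite -actM ab actK.
have [ba _|/fx //] := pselect (F2mul (F2inv b) a = F2one).
by rewrite -[a]F2mul1g -(F2mulgV b) F2mulA ba F2mulg1.
Qed.

Lemma Xfree_act a x : Xfree x -> Xfree (act a x).
Proof.
move=> fx g g1 E; apply: g1.
have /(congr1 (F2mul^~ (F2inv a))) : F2mul g a = a.
  by apply: (Xfree_act_inj fx); rewrite -actM.
by rewrite F2mulA !F2mulgV F2mulg1.
Qed.

Definition tgen (s b : bool) : F2 :=
  if s then (if b then T2 else T1) else (if b then F2inv T2 else F2inv T1).

Lemma tgen_word s b : F2word (tgen s b) = [:: (b, ~~ s)].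
Proof. by case: s; case: b. Qed.

Lemma tgen_inj s : injective (tgen s).
Proof. by move=> b b' /(congr1 F2word); rewrite !tgen_word => -[]. Qed.

Lemma tgen_act_inj x s : Xfree x -> injective (fun b => act (tgen s b) x).
Proof. by move=> fx b b' /(Xfree_act_inj fx)/tgen_inj. Qed.

Lemma tsetP x z : tset x z <-> exists b, z = act (tgen (x F2one) b) x.
Proof.
rewrite /tset /tgen; case: (x F2one); split=> [[]->|[[]->]];
  by [exists false | exists true | right | left].
Qed.

Lemma tset_tgen x b : tset x (act (tgen (x F2one) b) x).
Proof. by apply/tsetP; exists b. Qed.

(* Explicit, so that [G16b] reduces under [vm_compute]. *)
Definition ords4 : seq 'I_4 :=
  [:: @Ordinal 4 0 isT; @Ordinal 4 1 isT; @Ordinal 4 2 isT; @Ordinal 4 3 isT].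

Definition G16b (h : F2) : bool :=
  has (fun i => h == g4 i) ords4 ||
  has (fun i => has (fun j => (h == F2mul (g4 i) (g4 j)) && (F2len h == 4)%N) ords4)
      ords4.

Lemma G16bP h : G16b h -> G16 h.
Proof.
case/orP => [/hasP[i _ /eqP ->]|/hasP[i _ /hasP[j _ /andP[/eqP -> /eqP L]]]].
  by left; exists i.
by right; exists i, j.
Qed.

Lemma tgen_quad_G16 s t b1 b2 b3 b4 :
  let h := F2mul (F2mul (tgen s b2) (F2inv (tgen s b1)))
                 (F2mul (tgen t b3) (F2inv (tgen t b4))) in
  h = F2one \/ G16 h.
Proof.
move=> h; suff : (h == F2one) || G16b h by case/orP => [/eqP|/G16bP]; [left|right].
by rewrite {}/h; move: s t b1 b2 b3 b4; do 6 case; vm_compute.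
Qed.

Lemma tset_link x y z u v : tset x z -> tset y z -> tset x u -> tset y v ->
  exists h, (h = F2one \/ G16 h) /\ u = act h v.
Proof.
move=> /tsetP[b1 ->] /tsetP[b3 zE] /tsetP[b2 ->] /tsetP[b4 ->].
set s := x F2one in zE *; set t := y F2one in zE *.
exists (F2mul (F2mul (tgen s b2) (F2inv (tgen s b1)))
              (F2mul (tgen t b3) (F2inv (tgen t b4)))).
by split; [exact: tgen_quad_G16 | rewrite -!actM actK -zE actK].
Qed.

(** * An injective choice in t(x) *)

Definition orbit_rep (x : X) : X := xget point (range (act^~ x)).

Lemma orbit_rep_act a x : orbit_rep (act a x) = orbit_rep x.
Proof.
rewrite /orbit_rep; congr xget; apply/seteqP; split=> _ [g _ <-].
  by exists (F2mul g a); rewrite -?actM.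
by exists (F2mul g (F2inv a)); rewrite // -actM actK.
Qed.

Lemma orbit_rep_in x : exists g, act g (orbit_rep x) = x.
Proof.
rewrite /orbit_rep; have [|a _ <-] := @xgetPex _ point (range (act^~ x)).
  by exists x, F2one; rewrite ?act1.
by exists (F2inv a); rewrite actK.
Qed.

Definition orbit_coord (x : X) : F2 := sval (cid (orbit_rep_in x)).

Lemma orbit_coordK x : act (orbit_coord x) (orbit_rep x) = x.
Proof. exact: svalP (cid (orbit_rep_in x)). Qed.

Lemma Xfree_orbit_rep x : Xfree x -> Xfree (orbit_rep x).
Proof. by rewrite -(actK (orbit_coord x) (orbit_rep x)) orbit_coordK; apply: Xfree_act. Qed.

Definition tsel (s : bool) (g : F2) : bool := ohead (F2word g) == Some (linv (false, ~~ s)).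

Lemma tsel_word s g :
  F2word (F2mul (tgen s (tsel s g)) g) = (tsel s g, ~~ s) :: F2word g.
Proof.
rewrite F2mulE tgen_word /= red_id ?F2word_reduced //.
by rewrite /tsel; case: (F2word g) => [|[i e] w] //=; case: s; case: i; case: e.
Qed.

Lemma tsel_inj s s' g g' :
  F2mul (tgen s (tsel s g)) g = F2mul (tgen s' (tsel s' g')) g' -> g = g'.
Proof. by move/(congr1 F2word); rewrite !tsel_word => -[_ _ /F2word_inj]. Qed.

Definition tpick_shift (x : X) : F2 := tgen (x F2one) (tsel (x F2one) (orbit_coord x)).

Definition tpick (x : X) : X := act (tpick_shift x) x.

Lemma tpick_tset x : tset x (tpick x).
Proof. exact: tset_tgen. Qed.

Lemma tpick_inj x y : Xfree x -> Xfree y -> tpick x = tpick y -> x = y.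
Proof.
move=> fx fy xy.
have rxy : orbit_rep x = orbit_rep y by move: (congr1 orbit_rep xy); rewrite !orbit_rep_act.
have /tsel_inj cxy :
    F2mul (tpick_shift x) (orbit_coord x) = F2mul (tpick_shift y) (orbit_coord y).
  apply: (Xfree_act_inj (Xfree_orbit_rep fx)).
  by rewrite -!actM orbit_coordK rxy orbit_coordK; exact: xy.
by rewrite -(orbit_coordK x) -(orbit_coordK y) cxy rxy.
Qed.

(** * Cylinders and the null set X \ X' *)

Lemma InP (T : eqType) (x : T) s : reflect (List.In x s) (x \in s).
Proof.
elim: s => [|y s IH] /=; first by right.
rewrite inE; apply: (iffP orP) => [[/eqP ->|/IH]|[->|/IH]]; by [left | right | left].
Qed.

Lemma uniq_NoDup (T : eqType) (s : seq T) : uniq s -> List.NoDup s.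
Proof.
elim: s => [|x s IH] /=; first by constructor.
by case/andP => xs us; constructor; [move/InP; apply/negP | exact: IH].
Qed.

Lemma measurable_coord h b : measurable [set x : Xm | x h = b].
Proof. by apply: sub_sigma_algebra; exists h, b. Qed.

Lemma measurable_coord_eq a b : measurable [set x : Xm | x a = x b].
Proof.
rewrite (_ : [set x | _] = [set x : Xm | x a = true] `&` [set x | x b = true] `|`
                           [set x | x a = false] `&` [set x | x b = false]).
  by apply: measurableU; apply: measurableI; exact: measurable_coord.
by apply/seteqP; split=> x /=; [case: (x a) => <-; [left|right] | case=> -[-> ->]].
Qed.

Definition cylinder (s : seq F2) (v : F2 -> bool) : set Xm :=
  \bigcap_(h in [set` s]) [set x | x h = v h].

Definition pair_eqs (L : seq (F2 * F2)) : set Xm :=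
  \bigcap_(ab in [set` L]) [set x | x ab.1 = x ab.2].

Fixpoint pair_coords (L : seq (F2 * F2)) : seq F2 :=
  if L is ab :: L' then ab.1 :: ab.2 :: pair_coords L' else [::].

Lemma measurable_cylinder s v : measurable (cylinder s v).
Proof. by apply: fin_bigcap_measurable => // h _; exact: measurable_coord. Qed.

Lemma measurable_pair_eqs L : measurable (pair_eqs L).
Proof. by apply: fin_bigcap_measurable => // ab _; exact: measurable_coord_eq. Qed.

Lemma pair_eqs_nil : pair_eqs [::] = setT.
Proof. by rewrite /pair_eqs set_nil bigcap_set0. Qed.

Lemma pair_eqs_cons a b L : pair_eqs ((a, b) :: L) = [set x | x a = x b] `&` pair_eqs L.
Proof.
apply/seteqP; split=> x.
  move=> xL; split=> [|ab abL]; first exact: (xL (a, b) (mem_head _ _)).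
  by apply: (xL ab); rewrite /= inE abL orbT.
by move=> [xab xL] ab; rewrite /= inE => /orP[/eqP -> //|]; exact: xL.
Qed.

Definition upd2 (v : F2 -> bool) (a b : F2) (t : bool) : F2 -> bool :=
  fun h => if h \in [:: a; b] then t else v h.

Lemma cylinder_split a b s v : a \notin s -> b \notin s ->
  [set x | x a = x b] `&` cylinder s v =
  cylinder [:: a, b & s] (upd2 v a b true) `|` cylinder [:: a, b & s] (upd2 v a b false).
Proof.
move=> as_ bs; have upd2_s t h : h \in s -> upd2 v a b t h = v h.
  move=> hs; rewrite /upd2 !inE.
  have /negPf -> : h != a by apply: contraNneq as_ => <-.
  by have /negPf -> : h != b by apply: contraNneq bs => <-.
apply/seteqP; split=> x /=.
  move=> [xab xv]; suff xt : cylinder [:: a, b & s] (upd2 v a b (x a)) x.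
    by case: (x a) xt; [left | right].
  move=> h /=; rewrite !inE => /or3P[/eqP ->|/eqP ->|hs].
  - by rewrite /upd2 mem_head.
  - by rewrite /upd2 !inE eqxx orbT.
  - by rewrite upd2_s // xv.
suff xt t : cylinder [:: a, b & s] (upd2 v a b t) x -> x a = x b /\ cylinder s v x.
  by case=> /xt.
move=> xv; have bin : b \in [:: a, b & s] by rewrite !inE eqxx orbT.
split; first by rewrite (xv a (mem_head _ _)) (xv b bin) /upd2 mem_head !inE eqxx orbT.
by move=> h hs /=; rewrite -(upd2_s t) // xv //= !inE hs !orbT.
Qed.

Lemma cylinder_nil v : cylinder [::] v = setT.
Proof. by rewrite /cylinder set_nil bigcap_set0. Qed.

Definition cpow (c : letter) (k : nat) : F2 := F2mk (nseq k c).

Lemma reduced_nseq_cons k c w : reduced (c :: w) -> reduced (nseq k c ++ c :: w).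
Proof.
elim: k => [|k IH] //= /IH; case: k {IH} => [|k] /= ->.
all: by rewrite andbT eq_sym linv_neq.
Qed.

Lemma reduced_nseq k c : reduced (nseq k c).
Proof. by elim: k => [|[|k] IH] //=; move: IH => /= ->; rewrite andbT eq_sym linv_neq. Qed.

Lemma cpow_word c k : F2word (cpow c k) = nseq k c.
Proof. by rewrite /= red_id // reduced_nseq. Qed.

Lemma cpow_mul_word g c w k : F2word g = c :: w ->
  F2word (F2mul (cpow c k) g) = nseq k c ++ c :: w.
Proof.
move=> gw; rewrite F2mulE cpow_word gw red_id //.
by apply: reduced_nseq_cons; rewrite -gw F2word_reduced.
Qed.

Fixpoint fix_pairs (g : F2) (c : letter) (M n : nat) : seq (F2 * F2) :=
  if n is k.+1 then (F2mul (cpow c (k * M)%N) g, cpow c (k * M)%N) :: fix_pairs g c M k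
  else [::].

Lemma size_fix_pairs g c M n : size (fix_pairs g c M n) = n.
Proof. by elim: n => //= n ->. Qed.

Lemma fix_pairs_lengths g c w n : F2word g = c :: w ->
  path gtn (n * (size w).+2)%N (map F2len (pair_coords (fix_pairs g c (size w).+2 n))).
Proof.
move=> gw; have len_cpow k : F2len (cpow c k) = k by rewrite /F2len cpow_word size_nseq.
have len_mul k : F2len (F2mul (cpow c k) g) = (k + (size w).+1)%N.
  by rewrite /F2len (cpow_mul_word _ gw) size_cat size_nseq.
elim: n => [|n IH] //=; rewrite len_cpow len_mul IH andbT.
by apply/andP; split; lia.
Qed.

Lemma uniq_fix_pairs g c w n : F2word g = c :: w ->
  uniq (pair_coords (fix_pairs g c (size w).+2 n)).
Proof.
move=> gw; apply: (map_uniq (f := F2len)).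
exact: sorted_uniq (rev_trans ltn_trans) ltnn _ (path_sorted (fix_pairs_lengths n gw)).
Qed.

Lemma fixed_pair_eqs g c M n x : act g x = x -> pair_eqs (fix_pairs g c M n) x.
Proof.
move=> gx; elim: n => [|n IH] /=; first by rewrite pair_eqs_nil.
by rewrite pair_eqs_cons; split=> //=; rewrite -{2}gx.
Qed.

Lemma lee0_invexp2 (R : archiRealFieldType) (x : \bar R) :
  (forall n, (x <= (2%:R ^- n)%:E)%E) -> (x <= 0)%E.
Proof.
move=> x2; apply/lee_addgt0Pr => e e0; rewrite add0e.
apply: (le_trans (x2 (Num.bound e^-1))).
rewrite lee_fin -[leRHS]invrK lef_pV2 ?posrE ?exprn_gt0 ?invr_gt0 //.
exact/ltW/(upper_nthrootP (leqnn _)).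
Qed.

Section UniformProduct.
Variables (R : realType) (m : {measure set Xm -> \bar R}).
Hypothesis hm : is_uniform_product m.

Lemma measure_cylinder s v : uniq s -> m (cylinder s v) = (2%:R ^- size s)%:E.
Proof.
move=> us; rewrite -(hm v (uniq_NoDup us)); congr (m _).
by apply/seteqP; split=> x xv h hs; apply: xv; apply/InP.
Qed.

Lemma measure_pair_eqs L s v : uniq (pair_coords L ++ s) ->
  m (pair_eqs L `&` cylinder s v) = (2%:R ^- (size L + size s))%:E.
Proof.
elim: L s v => [|[a b] L IH] s v u.
  by rewrite pair_eqs_nil setTI measure_cylinder.
have u' : uniq (pair_coords L ++ [:: a, b & s]).
  have p : perm_eq ([:: a; b] ++ pair_coords L ++ s) (pair_coords L ++ [:: a; b] ++ s).
    by rewrite perm_catCA perm_refl.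
  by rewrite -(perm_uniq p).
move: u => /= /andP[]; rewrite inE mem_cat negb_or => /andP[_ /norP[_ as_]].
rewrite mem_cat => /andP[/norP[_ bs] _].
rewrite pair_eqs_cons (setIC [set x | _]) -setIA cylinder_split // setIUr.
rewrite measureU //.
- pose e := (2%:R ^- (size L + size [:: a, b & s]) : R)%:E.
  transitivity (e + e)%E; first by congr (_ + _); exact: IH.
  rewrite -EFinD /= !addnS addSn !exprS; congr EFin.
  by field; rewrite expf_neq0 // pnatr_eq0.
- by apply: measurableI; [exact: measurable_pair_eqs | exact: measurable_cylinder].
- by apply: measurableI; [exact: measurable_pair_eqs | exact: measurable_cylinder].
- apply/seteqP; split=> x // [[_ xt] [_ xf]].
  by move: (xt a (mem_head _ _)) (xf a (mem_head _ _)) => /=; rewrite /upd2 mem_head => ->.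
Qed.

Lemma fixed_negligible g : g <> F2one -> m.-negligible [set x : Xm | act g x = x].
Proof.
move=> g1; case gw: (F2word g) => [|c w].
  by case: g1; apply: F2word_inj; rewrite gw.
pose A n := pair_eqs (fix_pairs g c (size w).+2 n).
have mA n : m (A n) = (2%:R ^- n)%:E.
  have := @measure_pair_eqs (fix_pairs g c (size w).+2 n) [::] xpredT.
  by rewrite cylinder_nil setIT cats0 addn0 size_fix_pairs; apply; exact: uniq_fix_pairs.
have mAT : measurable (\bigcap_n A n).
  by apply: bigcapT_measurable => n; exact: measurable_pair_eqs.
exists (\bigcap_n A n); split=> //; last by move=> x gx n _; exact: fixed_pair_eqs.
apply/eqP; rewrite eq_le measure_ge0 andbT; apply: lee0_invexp2 => n.
rewrite -mA le_measure ?inE //; [exact: measurable_pair_eqs | exact: bigcap_inf].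
Qed.

Lemma nonfree_negligible : m.-negligible (~` Xfree).
Proof.
pose F n : set Xm := if unpickle n is Some g
  then (if g == F2one then set0 else [set x | act g x = x]) else set0.
apply: (@negligibleS _ _ _ _ (\bigcup_n F n)) => [x /= xnf|].
  have [g [g1 gx]] : exists g, g <> F2one /\ act g x = x.
    by apply: contrapT => ngx; apply: xnf => g g1 gx; apply: ngx; exists g.
  by exists (pickle g) => //; rewrite /F pickleK; case: eqP.
apply: negligible_bigcup => n; rewrite /F.
case: (unpickle n) => [g|]; last exact: negligible_set0.
by case: eqP => [_|/fixed_negligible //]; exact: negligible_set0.
Qed.

End UniformProduct.

Definition t_cylinder : set Xm :=
  cylinder [:: T1; T2; F2inv T1; F2inv T2] (fun h => h \in [:: T1; T2]).

Lemma tgenV_coord s b :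
  (F2inv (tgen s b) \in [:: T1; T2; F2inv T1; F2inv T2]) &&
  ((F2inv (tgen s b) \in [:: T1; T2]) == ~~ s).
Proof. by case: s; case: b; vm_compute. Qed.

Lemma tset_notin_t_cylinder x z : tset x z -> ~ t_cylinder z.
Proof.
case/tsetP => b -> /(_ (F2inv (tgen (x F2one) b))) /=.
case/andP: (tgenV_coord (x F2one) b) => hin /eqP -> /(_ hin).
by rewrite /act F2mulVg; case: (x F2one).
Qed.

(** * Invariant finitely additive extensions *)

Lemma image_actE g A : image_act (F2inv g) A = act g @^-1` A.
Proof.
apply/seteqP; split=> [_ [y Ay <-]|x Agx] /=; first by rewrite actVK.
by exists (act g x); rewrite ?actK.
Qed.

Lemma bigsetU_finP (I : finType) (T : Type) (F : I -> set T) x :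
  (\big[setU/set0]_i F i) x <-> exists i, F i x.
Proof.
rewrite -bigcup_seq; split=> [[i _ Fix]|[i Fix]]; first by exists i.
by exists i => //; exact: mem_index_enum.
Qed.

Section InvariantExtension.
Variables (R : realType) (m : {measure set Xm -> \bar R}).
Variables (B : set (set X)) (mu : set X -> R).
Hypothesis hmu : good_extension m B mu.

Lemma ext_setC A : B A -> B (~` A).
Proof. by case: hmu => _ [+ _]; apply. Qed.

Lemma ext_setU A C : B A -> B C -> B (A `|` C).
Proof. by case: hmu => _ [_ [+ _]]; apply. Qed.

Lemma ext_image g A : B A -> B (image_act g A).
Proof. by case: hmu => _ [_ [_ [+ _]]]; apply. Qed.

Lemma ext_m_measurable A : m_measurable m A -> B A.
Proof. by case: hmu => _ [_ [_ [_ [+ _]]]]; apply. Qed.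

Lemma mu_ge0 A : B A -> 0 <= mu A.
Proof. by case: hmu => _ [_ [_ [_ [_ [+ _]]]]]; apply. Qed.

Lemma mu_setT : mu setT = 1.
Proof. by case: hmu => _ [_ [_ [_ [_ [_ [+ _]]]]]]. Qed.

Lemma mu_setU A C : B A -> B C -> A `&` C = set0 -> mu (A `|` C) = mu A + mu C.
Proof. by case: hmu => _ [_ [_ [_ [_ [_ [_ [+ _]]]]]]]; apply. Qed.

Lemma mu_image g A : B A -> mu (image_act g A) = mu A.
Proof. by case: hmu => _ [_ [_ [_ [_ [_ [_ [_ [+ _]]]]]]]]; apply. Qed.

Lemma mu_ext A (C : set Xm) :
  measurable C -> m.-negligible (symdiff A C) -> (mu A)%:E = m C.
Proof. by case: hmu => _ [_ [_ [_ [_ [_ [_ [_ [_ +]]]]]]]]; apply. Qed.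

Lemma ext_setI A C : B A -> B C -> B (A `&` C).
Proof.
by move=> BA BC; rewrite -[A `&` C]setCK setCI; apply/ext_setC/ext_setU; exact: ext_setC.
Qed.

Lemma ext_set0 : B set0.
Proof. by rewrite -setCT; apply: ext_setC; case: hmu. Qed.

Lemma mu_set0 : mu set0 = 0.
Proof. by have := mu_setU ext_set0 ext_set0 (setI0 _); rewrite setU0; lra. Qed.

Lemma ext_bigsetU (I : Type) (s : seq I) (F : I -> set X) :
  (forall i, B (F i)) -> B (\big[setU/set0]_(i <- s) F i).
Proof. by move=> BF; elim/big_ind: _ => //; [exact: ext_set0 | exact: ext_setU]. Qed.

Lemma symdiff_negligible (A : set Xm) : m.-negligible (symdiff A A).
Proof. by apply: (negligibleS _ (negligible_set0 m)) => x [[]|[]]. Qed.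

Lemma ext_measurable (A : set Xm) : measurable A -> B A.
Proof.
by move=> mA; apply: ext_m_measurable; exists A; split=> //; exact: symdiff_negligible.
Qed.

Lemma mu_measurable (A : set Xm) : measurable A -> (mu A)%:E = m A.
Proof. by move=> mA; apply: mu_ext => //; exact: symdiff_negligible. Qed.

Lemma ext_negligible (A : set X) : m.-negligible A -> B A /\ mu A = 0.
Proof.
move=> nA; have nA0 : m.-negligible (symdiff A set0).
  by apply: negligibleS nA => x [[Ax _]|[[] _]].
split; first by apply: ext_m_measurable; exists set0.
by have := mu_ext measurable0 nA0; rewrite measure0 => -[].
Qed.

Lemma mu_setC A : B A -> mu (~` A) = 1 - mu A.
Proof.
move=> BA; rewrite -mu_setT -(setUv A) mu_setU //; [lra | exact: ext_setC | exact: setICr].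
Qed.

Lemma mu_conull A : m.-negligible (~` A) -> B A /\ mu A = 1.
Proof.
move=> /ext_negligible[BC muC]; have BA : B A by rewrite -[A]setCK; exact: ext_setC.
by split=> //; move: muC; rewrite mu_setC //; lra.
Qed.

Lemma mu_le A C : B A -> B C -> A `<=` C -> mu A <= mu C.
Proof.
move=> BA BC AC; have BCA : B (C `\` A) by apply: ext_setI => //; exact: ext_setC.
rewrite -(setDUK AC) mu_setU //; first by rewrite lerDl mu_ge0.
by apply/seteqP; split=> x // [? []].
Qed.

Lemma mu_bigsetU (I : choiceType) (s : seq I) (F : I -> set X) :
  uniq s -> (forall i, B (F i)) -> trivIset setT F ->
  mu (\big[setU/set0]_(i <- s) F i) = \sum_(i <- s) mu (F i).
Proof.
move=> + BF tF; elim: s => [_|i s IH /= /andP[i_s us]]; first by rewrite !big_nil mu_set0.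
rewrite !big_cons mu_setU ?IH //; first exact: ext_bigsetU.
apply/seteqP; split=> x // [Fix]; rewrite -bigcup_seq => -[j js Fjx].
have ij : i = j by apply: tF => //; exists x.
by move: i_s; rewrite ij js.
Qed.

Lemma mu_bigsetU_translates (I : finType) (P : I -> set X) (g : I -> F2) :
  (forall i, B (P i)) -> trivIset setT P ->
  trivIset setT (fun i => image_act (g i) (P i)) ->
  mu (\big[setU/set0]_i image_act (g i) (P i)) = mu (\big[setU/set0]_i P i).
Proof.
move=> BP tP tgP; rewrite !mu_bigsetU ?index_enum_uniq //.
  by apply: eq_bigr => i _; exact: mu_image.
by move=> i; exact: ext_image.
Qed.

Lemma ext_t_cylinder : B t_cylinder.
Proof. by apply: ext_measurable; exact: measurable_cylinder. Qed.

Lemma mu_t_cylinder : is_uniform_product m -> mu t_cylinder = 2%:R ^- 4.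
Proof.
move=> hm; have mT : measurable t_cylinder by exact: measurable_cylinder.
have := mu_measurable mT; rewrite /t_cylinder (measure_cylinder hm); last by vm_compute.
by case.
Qed.

End InvariantExtension.

(** * The colouring and the paradoxical pieces *)

Section Colouring.
Variable kappa : X -> 'I_17.
Hypothesis hkappa : forall g, G16 g -> forall x, Xfree x -> kappa (act g x) <> kappa x.

Lemma kappa_tset_neq x y z u v : tset x z -> tset y z -> tset x u -> tset y v ->
  Xfree v -> u <> v -> kappa u <> kappa v.
Proof.
move=> xz yz xu yv fv uv; have [h [[h1|hG] uE]] := tset_link xz yz xu yv.
  by case: uv; rewrite uE h1 act1.
by rewrite uE; exact: hkappa.
Qed.

Lemma tpick_rule x : rule_at kappa (kappa \o tpick) x.
Proof.
split=> [_|y [fx [fy [xy [z [xz yz]]]]]].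
  by apply/mem_set; exists (tpick x) => //; exact: tpick_tset.
apply: (kappa_tset_neq xz yz (tpick_tset x) (tpick_tset y)); first exact: Xfree_act.
by move/(tpick_inj fx fy).
Qed.

Lemma colouring_exists (R : realType) (m : {measure set Xm -> \bar R}) :
  exists c, satisfies m kappa c.
Proof.
exists (kappa \o tpick); apply: (negligibleS _ (negligible_set0 m)) => x /= nrule.
exact/nrule/tpick_rule.
Qed.

Variable c : X -> 'I_17.

Definition good_point : set X := Xfree `&` rule_at kappa c.

Definition piece (i : bool * bool * 'I_17) : set X :=
  [set x | [/\ good_point x, x F2one = i.1.1, c x = i.2
             & kappa (act (tgen i.1.1 i.1.2) x) = i.2]].

Definition piece_shift (i : bool * bool * 'I_17) : F2 := tgen i.1.1 i.1.2.

Lemma pieceE s b j : piece (s, b, j) =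
  good_point `&` [set x | x F2one = s] `&` c @^-1` [set j] `&`
  image_act (F2inv (tgen s b)) (Xfree `&` kappa @^-1` [set j]).
Proof.
rewrite image_actE; apply/seteqP; split=> x /=.
  by case=> -[fx rx] xs cx kx; do !split=> //; exact: Xfree_act.
by case=> -[[gx xs] cx] [_ kx].
Qed.

Lemma good_point_piece x : good_point x -> exists i, piece i x.
Proof.
move=> gx; case: (gx) => fx [/(_ fx) /set_mem[z xz kz] _].
have [b zE] := (tsetP x z).1 xz.
by exists (x F2one, b, c x); split=> //; rewrite -zE.
Qed.

Lemma trivIset_piece : trivIset setT piece.
Proof.
move=> [[s b] j] [[s' b'] j'] _ _ [x [[[fx _] /= xs cx kx] [_ /= xs' cx' kx']]].
subst s s' j j'; congr (_, _, _); apply: contrapT => bb'.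
apply: (kappa_tset_neq (tset_tgen x b) (tset_tgen x b) (tset_tgen x b) (tset_tgen x b')).
- exact: Xfree_act.
- by move/(tgen_act_inj fx).
- by rewrite kx kx'.
Qed.

Lemma trivIset_piece_shift : trivIset setT (fun i => image_act (piece_shift i) (piece i)).
Proof.
move=> [[s b] j] [[s' b'] j'] _ _.
move=> [z [[x [[fx rx] /= xs cx kx] xz] [y [[fy _] /= ys cy ky] yz]]].
subst s s' j j'; rewrite /piece_shift /= in xz yz; have [xy|xy] := pselect (x = y).
  by subst y; congr (_, _, _); apply: (tgen_act_inj (s := x F2one) fx); rewrite /= xz yz.
exfalso; apply: (rx.2 y); last by rewrite -kx -ky xz yz.
do !split=> //; exists z; split; [rewrite -xz | rewrite -yz]; exact: tset_tgen.
Qed.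

Lemma piece_shift_t_cylinder i : image_act (piece_shift i) (piece i) `<=` ~` t_cylinder.
Proof.
case: i => [[s b] j] _ [x [_ /= xs _ _] <-]; apply: (tset_notin_t_cylinder (x := x)).
by rewrite -xs; exact: tset_tgen.
Qed.

End Colouring.

Section Paradox.
Variables (R : realType) (m : {measure set Xm -> \bar R}) (kappa c : X -> 'I_17).
Variables (B : set (set X)) (mu : set X -> R).
Hypotheses (hm : is_uniform_product m) (hc : satisfies m kappa c).
Hypothesis hkappa_borel :
  forall j : 'I_17, measurable (Xfree `&` kappa @^-1` [set j] : set Xm).
Hypotheses (hmu : good_extension m B mu) (Bc : forall j, B (c @^-1` [set j])).

Lemma good_point_conull : B (good_point kappa c) /\ mu (good_point kappa c) = 1.
Proof.
apply: (mu_conull hmu); apply: negligibleS (negligibleU (nonfree_negligible hm) hc).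
by move=> x /= /not_andP[]; [left | right].
Qed.

Lemma ext_piece i : B (piece kappa c i).
Proof.
case: i => [[s b] j]; rewrite pieceE.
apply: (ext_setI hmu); last exact/(ext_image hmu)/(ext_measurable hmu).
apply: (ext_setI hmu) => //; apply: (ext_setI hmu); first exact: good_point_conull.1.
by apply: (ext_measurable hmu); exact: measurable_coord.
Qed.

Lemma mu_bigsetU_piece : mu (\big[setU/set0]_i piece kappa c i) = 1.
Proof.
case: good_point_conull => _ <-; congr mu; apply/seteqP; split=> x.
  by case/bigsetU_finP => -[[s b] j] [].
by move/good_point_piece/bigsetU_finP.
Qed.

Lemma mu_bigsetU_piece_shift_le :
  mu (\big[setU/set0]_i image_act (piece_shift i) (piece kappa c i)) <= 1 - 2%:R ^- 4.
Proof.
rewrite -(mu_t_cylinder hmu hm) -(mu_setC hmu (ext_t_cylinder hmu)).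
apply: (mu_le hmu); last by move=> z /bigsetU_finP[i]; exact: piece_shift_t_cylinder.
  by apply: (ext_bigsetU hmu) => i; apply: (ext_image hmu); exact: ext_piece.
exact/(ext_setC hmu)/(ext_t_cylinder hmu).
Qed.

End Paradox.

Unset Implicit Arguments.

Theorem proposition4 (R : realType) (m : {measure set Xm -> \bar R})
  (hm : is_uniform_product m)
  (kappa : X -> 'I_17)
  (hkappa_borel : forall j : 'I_17, measurable (Xfree `&` kappa @^-1` [set j] : set Xm))
  (hkappa : forall g, G16 g -> forall x, Xfree x -> kappa (act g x) <> kappa x) :
  paradoxical m kappa.
Proof.
split; first exact: colouring_exists.
move=> [B [mu [c [hmu [hc Bc]]]]].
have := mu_bigsetU_piece_shift_le hm hc hkappa_borel hmu Bc.
rewrite (mu_bigsetU_translates hmu (ext_piece hm hc hkappa_borel hmu Bc)).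
- rewrite (mu_bigsetU_piece hm hc hmu).
  have : 0 < 2%:R ^- 4 :> R by rewrite invr_gt0 exprn_gt0.
  lra.
- exact: (trivIset_piece (c := c) hkappa).
- exact: trivIset_piece_shift.
Qed.
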